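(* For every long virtual knot diagram $K$ with $m>0$ singular crossings (chords), there exist a regular twist lattice $\Phi_K:\mathbb{Z}^m\to\mathscr{K}$, $\alpha\in(\mathbb{Z}_{\ge 0})^m$ and $\nu\in\{+,-\}^m$ such that $\partial^{\nu\alpha}\Phi_K(\vec 0)=K$ as elements of $\mathbb{Z}[\mathscr{K}]$.
   Context: Long virtual knots: a long virtual knot diagram is a generic immersion $\mathbb{R}\to\mathbb{R}^2$, standard outside a compact set, oriented along the positive $x$-direction, with double points marked classical (over/under), virtual, or singular; $\mathscr{K}$ is the set of equivalence classes of diagrams without singular crossings. A diagram with singular crossings is regarded as an element of $\mathbb{Z}[\mathscr{K}]$ via $K_\times=K_+-K_-$ at each singular crossing. Gauss diagram: $\mathbb{R}$ with, for each classical crossing with preimages $x<y$, an arrow between $x$ and $y$ pointing right if the overcrossing is at $x$, left otherwise, labelled by its writhe sign; singular crossings are drawn as (signed) chords. Discrete derivatives: for $\Phi:\mathbb{Z}^m\to\mathbb{Z}[\mathscr{K}]$, $(\partial_i^+\Phi)(z)=\Phi(z+e_i)-\Phi(z)$, $(\partial_i^-\Phi)(z)=\Phi(z)-\Phi(z-e_i)$; for $a\ge0$, $\partial_i^{a}$ and $\partial_i^{-a}$ are the $a$-fold iterates of $\partial_i^+$ and $\partial_i^-$ (with $\partial_i^0=\mathrm{id}$); for $\alpha\in(\mathbb{Z}_{\ge0})^m$, $\nu\in\{+,-\}^m$, $\partial^{\nu\alpha}=\partial_1^{\nu_1\alpha_1}\cdots\partial_m^{\nu_m\alpha_m}$. Regular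 twist lattices: a proper pair is a pair of disjoint open intervals $A<A'$ of $\mathbb{R}$ such that every arrow or chord with an endpoint in $A\cup A'$ has one endpoint in each. Given $Y\in\{S,B\}$, $Z\in\{L,R\}$, a $p$-configuration in $(A,A')$ consists of $p$ arrows with endpoints $a_1<\dots<a_p$ in $A$, $b_1<\dots<b_p$ in $A'$, arrow $i$ joining $a_i$ to $b_i$ ($Y=S$) or $b_{p+1-i}$ ($Y=B$). A regular twist sequence of type $OYZ$ (resp. $EYZ$) with pair $(A,A')$ assigns to $k\in\mathbb{Z}$ a $p$-configuration with $p=|2k-1|$ (resp. $|2k|$), all arrows signed $+$ if $k\ge1$ and $-$ if $k\le0$, directions alternating with arrow $1$ pointing in direction $Z$ if $k\ge 1$ and opposite to $Z$ if $k\le0$. A regular twist lattice of dimension $m$ is $\Phi:\mathbb{Z}^m\to\mathscr{K}$ given by a fixed diagram $G$ and disjoint proper pairs $(A_i,A_i')$, $1\le i\le m$, free of endpoints of $G$, with $\Phi(k_1,\dots,k_m)$ equal to $G$ plus, in each $(A_i,A_i')$, the $k_i$-th configuration of a regular twist sequence of some type $OYZ$ or $EYZ$. *)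

(* Long virtual knots are modelled by their Gauss diagrams
   on the line (endpoints in rat; only their relative order matters) modulo
   the Gauss-diagram Reidemeister moves. *)
From Stdlib Require Import Relation_Operators.
From HB Require Import structures.
From mathcomp Require Import all_boot all_order all_algebra.
From mathcomp Require Import boolp.
Set Implicit Arguments. Unset Strict Implicit. Unset Printing Implicit Defensive.
Import Order.TTheory GRing.Theory Num.Theory.
Local Open Scope ring_scope.

(* An arrow (o, u, s): overcrossing preimage o, undercrossing preimage u,
   writhe sign s (true = +).  It points from o to u. *)
Definition arrow := (rat * rat * bool)%type.
Definition ov (a : arrow) : rat := a.1.1.
Definition un (a : arrow) : rat := a.1.2.
Definition sgn (a : arrow) : bool := a.2.

Definition gdiag := seq arrow.

Definition endpoints (D : gdiag) : seq rat :=
  flatten [seq [:: ov a; un a] | a <- D].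

Definition gwf (D : gdiag) : bool := uniq (endpoints D).

Definition sbetween (x y z : rat) : bool := ((x < z) && (z < y)) || ((y < z) && (z < x)).

Definition adjacent (D : gdiag) (x y : rat) : bool :=
  all (fun z => ~~ sbetween x y z) (endpoints D).

Definition sgz (b : bool) : int := if b then 1 else -1.

(* Three strands 1,2,3; pij is the preimage on strand i of its crossing with
   strand j; oij : strand i over strand j (for the cyclic pairs 12,23,31);
   eij : writhe sign of that crossing. *)
Definition r3_arrows (p12 p13 p21 p23 p31 p32 : rat)
  (o12 o23 o31 e12 e23 e31 : bool) : gdiag :=
  [:: if o12 then (p12, p21, e12) else (p21, p12, e12);
      if o23 then (p23, p32, e23) else (p32, p23, e23);
      if o31 then (p31, p13, e31) else (p13, p31, e31)].

(* Realizability of an Omega_3 configuration: the heights are a total order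
   (no cyclic over-relation) and the signs satisfy
   e_ij = s * h_ij * a_i * a_j for a common s, where a_i records the order of
   the two points on strand i (a_1 : p13 < p12, a_2 : p21 < p23,
   a_3 : p32 < p31). *)
Definition r3_ok (p12 p13 p21 p23 p31 p32 : rat)
  (o12 o23 o31 e12 e23 e31 : bool) : Prop :=
  let a1 := p13 < p12 in let a2 := p21 < p23 in let a3 := p32 < p31 in
  ~~ [&& o12 == o23 & o23 == o31] /\
  sgz e12 * sgz o12 * sgz a1 * sgz a2 = sgz e23 * sgz o23 * sgz a2 * sgz a3 /\
  sgz e23 * sgz o23 * sgz a2 * sgz a3 = sgz e31 * sgz o31 * sgz a3 * sgz a1.

Definition move (D D' : gdiag) : Prop :=
  (* relabelling of the arrows *)
  perm_eq D D' \/
  (* isotopy of the line (order-preserving change of endpoints) *)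
  (exists f : rat -> rat,
      {in endpoints D &, forall x y, x < y -> f x < f y} /\
      D' = [seq (f (ov a), f (un a), sgn a) | a <- D]) \/
  (* Omega_1: an arrow with adjacent endpoints, any direction and sign *)
  (exists x, D' = x :: D /\ adjacent D' (ov x) (un x)) \/
  (* Omega_2: two arrows of opposite signs, tails adjacent, heads adjacent *)
  (exists x1 x2, D' = x1 :: x2 :: D /\ sgn x1 != sgn x2 /\
      adjacent D' (ov x1) (ov x2) /\ adjacent D' (un x1) (un x2)) \/
  (* Omega_3: reverse the order of the points on each of the three segments *)
  (exists (E : gdiag) (p12 p13 p21 p23 p31 p32 : rat) (o12 o23 o31 e12 e23 e31 : bool),
      D = r3_arrows p12 p13 p21 p23 p31 p32 o12 o23 o31 e12 e23 e31 ++ E /\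
      D' = r3_arrows p13 p12 p23 p21 p32 p31 o12 o23 o31 e12 e23 e31 ++ E /\
      r3_ok p12 p13 p21 p23 p31 p32 o12 o23 o31 e12 e23 e31 /\
      adjacent D p12 p13 /\ adjacent D p21 p23 /\ adjacent D p31 p32).

Definition step (D D' : gdiag) : Prop := gwf D /\ gwf D' /\ move D D'.

(* equivalence of long virtual knot diagrams; classes = the set \mathscr{K} *)
Definition gequiv : gdiag -> gdiag -> Prop := clos_refl_sym_trans gdiag step.

Definition combo := seq (int * gdiag).

(* equality in the free abelian group Z[\mathscr{K}] on equivalence classes *)
Definition zeq (c1 c2 : combo) : Prop :=
  forall D : gdiag,
    \sum_(x <- c1 | `[< gequiv x.2 D >]) x.1 = \sum_(x <- c2 | `[< gequiv x.2 D >]) x.1.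

Definition cneg (c : combo) : combo := [seq (- x.1, x.2) | x <- c].

(* A singular chord (x, y): its positive resolution K_+ is the arrow (x,y,+)
   (overcrossing at x), its negative resolution K_- is (y,x,-). *)
Record sdiag := SDiag { sarrows : gdiag; schords : seq (rat * rat) }.

Definition swf (K : sdiag) : bool :=
  uniq (endpoints (sarrows K) ++ flatten [seq [:: c.1; c.2] | c <- schords K]).

Fixpoint resolve_aux (D : gdiag) (cs : seq (rat * rat)) : combo :=
  match cs with
  | [::] => [:: (1, D)]
  | c :: cs' => resolve_aux (rcons D (c.1, c.2, true)) cs'
                ++ cneg (resolve_aux (rcons D (c.2, c.1, false)) cs')
  end.

(* the element of Z[\mathscr{K}] given by K, via K_x = K_+ - K_- *)
Definition resolve (K : sdiag) : combo := resolve_aux (sarrows K) (schords K).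

Section Deriv.
Variable m : nat.
Definition zshift (z : 'I_m -> int) (i : 'I_m) (d : int) : 'I_m -> int :=
  fun j => if j == i then z j + d else z j.
Definition dplus (i : 'I_m) (F : ('I_m -> int) -> combo) : ('I_m -> int) -> combo :=
  fun z => F (zshift z i 1) ++ cneg (F z).
Definition dminus (i : 'I_m) (F : ('I_m -> int) -> combo) : ('I_m -> int) -> combo :=
  fun z => F z ++ cneg (F (zshift z i (-1))).
(* nu i = true means +, false means - *)
Definition diter (i : 'I_m) (nu : bool) (a : nat) (F : ('I_m -> int) -> combo) :=
  iter a (if nu then dplus i else dminus i) F.
(* \partial^{nu alpha} = \partial_1^{nu_1 alpha_1} ... \partial_m^{nu_m alpha_m} *)
Definition dderiv (nu : 'I_m -> bool) (alpha : 'I_m -> nat)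
  (F : ('I_m -> int) -> combo) : ('I_m -> int) -> combo :=
  foldr (fun i G => diter i (nu i) (alpha i) G) F (enum 'I_m).
End Deriv.

Definition inI (I : rat * rat) (x : rat) : bool := (I.1 < x) && (x < I.2).
Definition disjI (I J : rat * rat) : bool := (I.2 <= J.1) || (J.2 <= I.1).

(* number of arrows of the k-th configuration; typ_O = true for type O *)
Definition tw_p (typ_O : bool) (k : int) : nat :=
  if typ_O then absz (2 * k - 1)%R else absz (2 * k)%R.

(* the j-th of p evenly spaced points of I (j = 1..p) *)
Definition pt (I : rat * rat) (p j : nat) : rat :=
  I.1 + (I.2 - I.1) * (j%:R / (p.+1)%:R).

(* k-th configuration of a regular twist sequence of type (O|E) Y Z in (A,A');
   typ_S : Y = S, typ_R : Z = R.  Arrow j (1-based) joins a_j to b_j (S) or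
   b_{p+1-j} (B); pointing right means overcrossing at a_j. *)
Definition twist_config (A A' : rat * rat) (typ_O typ_S typ_R : bool) (k : int) : gdiag :=
  let p := tw_p typ_O k in
  let pos := (1 <= k) in
  let r0 := if pos then typ_R else ~~ typ_R in
  [seq (let a := pt A p j in
        let b := pt A' p (if typ_S then j else (p.+1 - j)%N) in
        let right := if odd j then r0 else ~~ r0 in
        if right then (a, b, pos) else (b, a, pos)) | j <- iota 1 p].

Record tl_data (m : nat) := TL {
  tlG : gdiag;
  tlA : 'I_m -> rat * rat;
  tlA' : 'I_m -> rat * rat;
  tlO : 'I_m -> bool;  (* type O (true) or E (false) *)
  tlS : 'I_m -> bool;  (* Y = S (true) or B (false) *)
  tlR : 'I_m -> bool   (* Z = R (true) or L (false) *)
}.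

Definition tl_ok (m : nat) (L : tl_data m) : Prop :=
  gwf (tlG L) /\
  (forall i, (tlA L i).1 < (tlA L i).2 /\ (tlA L i).2 <= (tlA' L i).1 /\
             (tlA' L i).1 < (tlA' L i).2) /\
  (forall i j, i != j ->
     [&& disjI (tlA L i) (tlA L j), disjI (tlA L i) (tlA' L j),
         disjI (tlA' L i) (tlA L j) & disjI (tlA' L i) (tlA' L j)]) /\
  (forall i x, x \in endpoints (tlG L) -> ~~ inI (tlA L i) x && ~~ inI (tlA' L i) x).

Definition lattice_diag (m : nat) (L : tl_data m) (z : 'I_m -> int) : gdiag :=
  tlG L ++ flatten [seq twist_config (tlA L i) (tlA' L i) (tlO L i) (tlS L i) (tlR L i) (z i)
                   | i <- enum 'I_m].

Definition lattice_fun (m : nat) (L : tl_data m) : ('I_m -> int) -> combo :=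
  fun z => [:: (1, lattice_diag L z)].

From HB Require Import structures.
From mathcomp Require Import all_boot all_order all_algebra.
From mathcomp Require Import boolp ring lra.
Import Order.TTheory GRing.Theory Num.Theory.
Local Open Scope ring_scope.

(* Around the two endpoints of each chord of K place tiny disjoint intervals
   carrying a regular twist sequence of type OSZ, with Z chosen by the
   direction of the chord.  Configuration 1 of such a sequence is a single
   positive arrow and configuration 0 a single negative arrow pointing the
   other way, i.e. the two resolutions K_+ and K_- of the chord.  Hence the
   forward difference in each coordinate at 0 resolves one chord, and the
   mixed difference with all alpha_i = 1 and all nu_i = + is, on the nose,
   the full resolution of K. *)

Lemma exists_separation_point (x : rat) (P : seq rat) :
  exists2 d : rat, 0 < d & {in P, forall y, y != x -> d <= `|x - y|}.
Proof.
elim: P => [|y P [d d_gt0 sepP]]; first by exists 1.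
have [->|neq_yx] := eqVneq y x.
  by exists d => // z; rewrite inE => /predU1P [->|/sepP //]; rewrite eqxx.
exists (Order.min d `|x - y|); first by rewrite lt_min d_gt0 normr_gt0 subr_eq0 eq_sym.
move=> z; rewrite inE => /predU1P [-> _|zP neq_zx]; first by rewrite ge_min lexx orbT.
by rewrite ge_min sepP.
Qed.

Lemma exists_separation (P : seq rat) :
  exists2 e : rat, 0 < e & {in P &, forall x y, x != y -> e <= `|x - y|}.
Proof.
elim: P => [|x P [e e_gt0 sepP]]; first by exists 1.
have [d d_gt0 sep_x] := exists_separation_point x P.
exists (Order.min e d); first by rewrite lt_min e_gt0.
move=> y z; rewrite !inE => /predU1P [->|yP] /predU1P [->|zP] neq_yz.
- by rewrite eqxx in neq_yz.
- by rewrite ge_min sep_x ?orbT // eq_sym.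
- by rewrite ge_min distrC sep_x ?orbT.
- by rewrite ge_min sepP.
Qed.

Definition ball_interval (r u : rat) : rat * rat := (u - r, u + r).

Lemma pt_ball_interval (r u : rat) : pt (ball_interval r u) 1 1 = u.
Proof. by rewrite /pt /=; field. Qed.

Lemma disjI_ball_interval (r u v : rat) :
  2 * r <= `|u - v| -> disjI (ball_interval r u) (ball_interval r v).
Proof. by rewrite /disjI /= ler_normr => /orP [] ?; apply/orP; [right|left]; lra. Qed.

Lemma notin_ball_interval (r u x : rat) :
  0 < r -> 2 * r <= `|u - x| -> ~~ inI (ball_interval r u) x.
Proof. by rewrite /inI /= ler_normr => ? /orP [] ?; apply/negP => /andP [] *; lra. Qed.

Lemma ball_intervals_ordered (r u v : rat) : 0 < r -> u <= v -> 2 * r <= `|u - v| ->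
  (ball_interval r u).1 < (ball_interval r u).2 /\
  (ball_interval r u).2 <= (ball_interval r v).1 /\
  (ball_interval r v).1 < (ball_interval r v).2.
Proof. by rewrite /= ler_normr => ? ? /orP [] ?; (split; last split); lra. Qed.

Lemma uniq_flatten_nth {T : eqType} {ss : seq (seq T)} (i : nat) :
  uniq (flatten ss) -> uniq (nth [::] ss i).
Proof.
elim: ss i => [|s ss IH] [|i] //=; rewrite cat_uniq => /and3P [// _ _]; exact: IH.
Qed.

Lemma mem_flatten_nth {T : eqType} (ss : seq (seq T)) (i : nat) (x : T) :
  x \in nth [::] ss i -> x \in flatten ss.
Proof.
case: (ltnP i (size ss)) => [lt_i_ss xi|le_ss_i]; last by rewrite nth_default.
by apply/flattenP; exists (nth [::] ss i); rewrite ?mem_nth.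
Qed.

Lemma uniq_flatten_nth_inj {T : eqType} {ss : seq (seq T)} {i j : nat} (x : T) :
  uniq (flatten ss) -> x \in nth [::] ss i -> x \in nth [::] ss j -> i = j.
Proof.
elim: ss i j => [|s ss IH] [|i] [|j] //=; rewrite cat_uniq => /and3P [_ /hasPn disj uss].
- by move=> xs /mem_flatten_nth /disj; rewrite xs.
- by move=> /mem_flatten_nth /disj + xs; rewrite xs.
- by move=> xi xj; rewrite (IH i j).
Qed.

Definition chord_pts (c : rat * rat) : seq rat := [:: c.1; c.2].

Lemma min_chord_pts (c : rat * rat) : Order.min c.1 c.2 \in chord_pts c.
Proof. by rewrite /Order.min; case: ifP; rewrite !inE eqxx ?orbT. Qed.

Lemma max_chord_pts (c : rat * rat) : Order.max c.1 c.2 \in chord_pts c.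
Proof. by rewrite /Order.max; case: ifP; rewrite !inE eqxx ?orbT. Qed.

Lemma min_max_chord_neq (c : rat * rat) :
  c.1 != c.2 -> Order.min c.1 c.2 != Order.max c.1 c.2.
Proof. by rewrite /Order.min /Order.max; case: ifP => // _; rewrite eq_sym. Qed.

Definition tl_config {m : nat} (L : tl_data m) (i : 'I_m) (k : int) : gdiag :=
  twist_config (tlA L i) (tlA' L i) (tlO L i) (tlS L i) (tlR L i) k.

Section FirstDifferences.
Variables (m : nat) (L : tl_data m) (ch : 'I_m -> rat * rat).
Hypothesis config1 : forall i, tl_config L i 1 = [:: ((ch i).1, (ch i).2, true)].
Hypothesis config0 : forall i, tl_config L i 0 = [:: ((ch i).2, (ch i).1, false)].

(* [p] lists the coordinates already differentiated, [s] those still to be. *)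
Lemma foldr_dplus_lattice_fun (s p : seq 'I_m) (z : 'I_m -> int) :
  p ++ s = enum 'I_m -> {in s, forall j, z j = 0} ->
  foldr (fun i F => dplus i F) (lattice_fun L) s z
  = resolve_aux (tlG L ++ flatten [seq tl_config L i (z i) | i <- p]) [seq ch i | i <- s].
Proof.
elim: s p z => [|i s IH] p z enum_ps zs0 /=.
  by rewrite /lattice_fun /lattice_diag -enum_ps cats0.
have /and3P [_ i_notin_p i_notin_s] : [&& uniq p, i \notin p & i \notin s].
  move: (enum_uniq 'I_m); rewrite -enum_ps cat_uniq /= negb_or.
  by case/and4P => -> /andP [-> _] ->.
have enum_ps' : rcons p i ++ s = enum 'I_m by rewrite cat_rcons.
have zs0' : {in s, forall j, z j = 0} by move=> j js; apply: zs0; rewrite inE js orbT.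
have shift_s0 : {in s, forall j, zshift z i 1 j = 0}.
  move=> j js; rewrite /zshift; case: eqVneq => [eq_ji|_]; last exact: zs0'.
  by move: i_notin_s; rewrite -eq_ji js.
have shift_p : [seq tl_config L j (zshift z i 1 j) | j <- p]
               = [seq tl_config L j (z j) | j <- p].
  apply/eq_in_map => j jp; rewrite /zshift; case: eqVneq => // eq_ji.
  by move: i_notin_p; rewrite -eq_ji jp.
rewrite /dplus (IH _ _ enum_ps' shift_s0) (IH _ _ enum_ps' zs0').
rewrite !map_rcons !flatten_rcons shift_p.
by rewrite /zshift eqxx zs0 ?mem_head // add0r config1 config0 !catA !cats1.
Qed.

Lemma dderiv1_lattice_fun :
  dderiv (fun _ => true) (fun _ => 1%N) (lattice_fun L) (fun _ => 0)
  = resolve_aux (tlG L) [seq ch i | i <- enum 'I_m].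
Proof.
rewrite -[tlG L]cats0.
exact: (foldr_dplus_lattice_fun (enum 'I_m) [::] (fun _ => 0) erefl (fun _ _ => erefl)).
Qed.

End FirstDifferences.

Section ChordLattice.
Variables (G : gdiag) (chords : seq (rat * rat)).

Definition chord (i : 'I_(size chords)) : rat * rat := nth (0, 0) chords i.

(* Type OSR when the chord points right, OSL otherwise, so that
   configurations 1 and 0 are the positive and negative resolutions. *)
Definition chord_lattice (r : rat) : tl_data (size chords) :=
  TL G (fun i => ball_interval r (Order.min (chord i).1 (chord i).2))
       (fun i => ball_interval r (Order.max (chord i).1 (chord i).2))
       (fun _ => true) (fun _ => true) (fun i => (chord i).1 < (chord i).2).

Lemma chord_lattice_config1 (r : rat) (i : 'I_(size chords)) :
  tl_config (chord_lattice r) i 1 = [:: ((chord i).1, (chord i).2, true)].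
Proof.
rewrite /tl_config /twist_config /tw_p /= !pt_ball_interval /Order.min /Order.max.
by case: ltP => // /ltW le21; rewrite (le_gtF le21).
Qed.

Lemma chord_lattice_config0 (r : rat) (i : 'I_(size chords)) :
  tl_config (chord_lattice r) i 0 = [:: ((chord i).2, (chord i).1, false)].
Proof.
rewrite /tl_config /twist_config /tw_p /= !pt_ball_interval /Order.min /Order.max.
by case: ltP => // /ltW le21; rewrite (le_gtF le21).
Qed.

Lemma map_chord_enum : [seq chord i | i <- enum 'I_(size chords)] = chords.
Proof.
rewrite /chord (map_comp (nth (0, 0) chords) val) val_enum_ord.
exact: mkseq_nth.
Qed.

Lemma dderiv1_chord_lattice (r : rat) :
  dderiv (fun _ => true) (fun _ => 1%N) (lattice_fun (chord_lattice r)) (fun _ => 0)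
  = resolve_aux G chords.
Proof.
rewrite (dderiv1_lattice_fun _ _ _ (chord_lattice_config1 r) (chord_lattice_config0 r)).
by rewrite map_chord_enum.
Qed.

Hypothesis uniq_pts : uniq (endpoints G ++ flatten [seq chord_pts c | c <- chords]).
Variable e : rat.
Hypothesis e_gt0 : 0 < e.
Hypothesis sep_pts : {in endpoints G ++ flatten [seq chord_pts c | c <- chords] &,
  forall x y, x != y -> e <= `|x - y|}.

Lemma nth_chord_pts (i : 'I_(size chords)) :
  nth [::] [seq chord_pts c | c <- chords] i = chord_pts (chord i).
Proof. by rewrite (nth_map (0, 0)). Qed.

Lemma mem_chord_pts_flatten {i : 'I_(size chords)} {x : rat} :
  x \in chord_pts (chord i) -> x \in flatten [seq chord_pts c | c <- chords].
Proof. by rewrite -nth_chord_pts; apply: mem_flatten_nth. Qed.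

Lemma chord_pts_sep {i j : 'I_(size chords)} {x y : rat} :
  x \in chord_pts (chord i) -> y \in chord_pts (chord j) -> x != y -> e <= `|x - y|.
Proof.
move=> /mem_chord_pts_flatten xP /mem_chord_pts_flatten yP.
by apply: sep_pts; rewrite mem_cat ?xP ?yP orbT.
Qed.

Lemma chord_lattice_ok : tl_ok (chord_lattice (e / 2)).
Proof.
move: (uniq_pts); rewrite cat_uniq => /and3P [uniqG /hasPn G_chords uniq_chords].
have twice_half : 2 * (e / 2) = e by field.
split=> //; split; [|split] => /=.
- move=> i; apply: ball_intervals_ordered; first by rewrite divr_gt0.
    by rewrite ge_min !le_max !lexx.
  rewrite twice_half; apply: (chord_pts_sep (min_chord_pts _) (max_chord_pts _)).
  apply: min_max_chord_neq.
  by have := uniq_flatten_nth i uniq_chords; rewrite nth_chord_pts /= inE andbT.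
- move=> i j neq_ij.
  have disj x y : x \in chord_pts (chord i) -> y \in chord_pts (chord j) ->
      disjI (ball_interval (e / 2) x) (ball_interval (e / 2) y).
    move=> xi yj; apply: disjI_ball_interval; rewrite twice_half.
    apply: (chord_pts_sep xi yj); apply: contra neq_ij => /eqP eq_xy; apply/eqP/val_inj.
    by apply: (uniq_flatten_nth_inj x uniq_chords); rewrite nth_chord_pts // eq_xy.
  by rewrite !disj ?min_chord_pts ?max_chord_pts.
- move=> i x xG.
  have out u : u \in chord_pts (chord i) -> ~~ inI (ball_interval (e / 2) u) x.
    move=> ui; have uP := mem_chord_pts_flatten ui.
    have neq_ux : u != x by apply: contraNneq (G_chords u uP) => ->.
    apply: notin_ball_interval; first by rewrite divr_gt0.
    by rewrite twice_half; apply: sep_pts neq_ux; rewrite mem_cat ?uP ?xG ?orbT.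
  by rewrite !out ?min_chord_pts ?max_chord_pts.
Qed.

End ChordLattice.

Theorem lemma5 (K : sdiag) :
  swf K -> (0 < size (schords K))%N ->
  exists L : tl_data (size (schords K)), tl_ok L /\
    exists (alpha : 'I_(size (schords K)) -> nat) (nu : 'I_(size (schords K)) -> bool),
      zeq (dderiv nu alpha (lattice_fun L) (fun _ => 0)) (resolve K).
Proof.
move=> wfK _.
have [e e_gt0 sepK] := exists_separation
  (endpoints (sarrows K) ++ flatten [seq chord_pts c | c <- schords K]).
exists (chord_lattice (sarrows K) (schords K) (e / 2)).
split; first exact: chord_lattice_ok.
exists (fun _ => 1%N), (fun _ => true).
by rewrite dderiv1_chord_lattice.
Qed.
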